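(* Let $\{(G_n,r_n),g_n^{n+1}\}$ be a g-cell structure in which every $G_n$ has the discrete topology, with inverse limit $G_\infty$, natural relation $r$ and quotient map $\pi:G_\infty\to G^\ast=G_\infty/r$. Suppose that for every $\bar x=(x_n)\in G_\infty$ and every open set $A\subset G_\infty$ with $B(\bar x,r)\subset A$ there exists $j\in\mathbb{N}$ such that $B(g_j^{-1}(x_j),r)\subset A$. Then the collection $$\{G^\ast\setminus\pi(G_\infty\setminus\mathcal V):\ \mathcal V \text{ open in } G_\infty\}$$ is a basis of open sets for the topology of $G^\ast$.
   Context: A cellular graph is a pair $(G,r)$ where $G$ is a nonempty topological space and $r\subset G\times G$ is a reflexive and symmetric relation. For $u\in G$, $B(u,r)=\{v\in G:(u,v)\in r\}$, and for $A\subset G$, $B(A,r)=\bigcup_{a\in A}B(a,r)$. An inverse sequence of cellular graphs $\{(G_n,r_n),g_n^{n+1}\}$ consists of cellular graphs $(G_n,r_n)$, $n\in\mathbb{N}$, and continuous maps $g_n^{n+1}:G_{n+1}\to G_n$ such that $(g_n^{n+1}(x),g_n^{n+1}(y))\in r_n$ whenever $(x,y)\in r_{n+1}$; $g_n^n=\mathrm{id}$, $g_n^l=g_n^{n+1}\circ\cdots\circ g_{l-1}^{l}$. Its inverse limit is $G_\infty=\{(x_n)\in\prod_n G_n: g_i^j(x_j)=x_i\ \forall j\ge i\}$ with the subspace of the product topology; $g_i:G_\infty\to G_i$ is the restricted $i$-th projection. The natural relation on $G_\infty$ is $r=\{(\bar x,\bar y):(x_n,y_n)\in r_n\ \forall n\}$.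 The sequence is a g-cell structure if $r$ is an equivalence relation; $G^\ast=G_\infty/r$ carries the quotient topology and $\pi$ is the quotient map. *)

From Stdlib Require Import List.


Section GCell.

(* An inverse sequence of cellular graphs whose spaces G n all carry the
   DISCRETE topology (so every subset of G n is open and every map out of
   G n is continuous; no topology data needs to be stored). *)
Variable G : nat -> Type.
Variable r : forall n, G n -> G n -> Prop.
Variable g : forall n, G (S n) -> G n.

Definition cellular_graph (n : nat) : Prop :=
  inhabited (G n) /\ (forall u, r n u u) /\ (forall u v, r n u v -> r n v u).

Definition inverse_seq_cellular : Prop :=
  (forall n, cellular_graph n) /\
  (forall n x y, r (S n) x y -> r n (g n x) (g n y)).

Fixpoint bond (i k : nat) : G (k + i) -> G i :=
  match k return G (k + i) -> G i with
  | O => fun x => x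
  | S k' => fun x => bond i k' (g (k' + i) x)
  end.

Definition prodG : Type := forall n, G n.
Definition in_limit (x : prodG) : Prop := forall i k, bond i k (x (k + i)) = x i.
Definition Ginf : Type := { x : prodG | in_limit x }.
Definition coord (x : Ginf) (n : nat) : G n := proj1_sig x n.

(* product topology on prodG with discrete factors: U is open iff every
   point of U has a basic neighbourhood prod_{i in F} V_i x prod_{rest} G_i
   (F finite, V_i arbitrary since the factors are discrete) inside U. *)
Definition prod_open (U : prodG -> Prop) : Prop :=
  forall x, U x -> exists (F : list nat) (V : forall i, G i -> Prop),
    (forall i, In i F -> V i (x i)) /\
    (forall y, (forall i, In i F -> V i (y i)) -> U y).

Definition open_inf (A : Ginf -> Prop) : Prop :=
  exists U, prod_open U /\ forall x : Ginf, A x <-> U (proj1_sig x).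

Definition r_inf (x y : Ginf) : Prop := forall n, r n (coord x n) (coord y n).

Definition equivalence_rel {T : Type} (R : T -> T -> Prop) : Prop :=
  (forall x, R x x) /\ (forall x y, R x y -> R y x) /\
  (forall x y z, R x y -> R y z -> R x z).

Definition g_cell_structure : Prop := inverse_seq_cellular /\ equivalence_rel r_inf.

Definition Ball (x : Ginf) : Ginf -> Prop := fun y => r_inf x y.
Definition BallSet (A : Ginf -> Prop) : Ginf -> Prop :=
  fun y => exists a, A a /\ r_inf a y.

(* g_j^{-1}(x_j) for x in G_oo *)
Definition fiber (j : nat) (x : Ginf) : Ginf -> Prop :=
  fun y => coord y j = coord x j.

Definition Gstar : Type := { C : Ginf -> Prop | exists x, C = r_inf x }.
Definition pi (x : Ginf) : Gstar := exist _ (r_inf x) (ex_intro _ x eq_refl).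

Definition open_star (W : Gstar -> Prop) : Prop :=
  open_inf (fun x => W (pi x)).

Definition star_set (V : Ginf -> Prop) : Gstar -> Prop :=
  fun p => ~ (exists x, ~ V x /\ pi x = p).

Definition is_basis {T : Type} (opn : (T -> Prop) -> Prop)
    (Bs : (T -> Prop) -> Prop) : Prop :=
  (forall B, Bs B -> opn B) /\
  (forall W p, opn W -> W p -> exists B, Bs B /\ B p /\ (forall q, B q -> W q)).

End GCell.
Arguments open_inf {G g} A.
Arguments r_inf {G r g} x y.
Arguments Ball {G r g} x y.
Arguments BallSet {G r g} A y.
Arguments fiber {G g} j x y.
Arguments star_set {G r g} V p.

From Stdlib Require Import List Classical FunctionalExtensionality PropExtensionality ProofIrrelevance.

(* Write V* = G* \ pi(G_oo \ V).  A point pi(x) lies in V*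
   exactly when the whole class B(x, r) is contained in V, so the preimage
   pi^{-1}(V* ) is the set of points whose r-ball lies in V.  When V is open,
   the hypothesis gives for each such x an index j with B(g_j^{-1}(x_j), r)
   inside V; every point of the cylinder g_j^{-1}(x_j) then also has its ball
   inside V.  Hence pi^{-1}(V* ) is a union of one-coordinate cylinders, which
   is open in the product topology, i.e. V* is open in G*.  Conversely every
   open W of G* equals (pi^{-1} W)*, since pi is surjective, and pi^{-1} W is
   open by definition of the quotient topology; so the sets V* form a basis. *)

Section Quotient.

Variable G : nat -> Type.
Variable r : forall n, G n -> G n -> Prop.
Variable g : forall n, G (S n) -> G n.

Lemma pi_surjective (q : Gstar G r g) : exists x, q = pi G r g x.
Proof.
  destruct q as [C [x HC]]. exists x.
  apply ProofIrrelevanceTheory.subset_eq_compat. exact HC.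
Qed.

Lemma prod_open_cylinder_union (S : forall j, G j -> Prop) :
  prod_open G (fun z => exists j, S j (z j)).
Proof.
  intros z [j Hj].
  exists (j :: nil), (fun i w => exists y : prodG G, y i = w /\ y j = z j).
  split.
  - intros i _. exists z. split; reflexivity.
  - intros y Hy. destruct (Hy j (or_introl eq_refl)) as [y' [E1 E2]].
    exists j. rewrite <- E1, E2. exact Hj.
Qed.

Lemma star_set_preimage (W : Gstar G r g -> Prop) (q : Gstar G r g) :
  @star_set G r g (fun x => W (pi G r g x)) q <-> W q.
Proof.
  destruct (pi_surjective q) as [x ->]. split.
  - intros Hq. apply NNPP. intros HW. apply Hq. exists x. split; auto.
  - intros HW [y [HWy Hy]]. apply HWy. rewrite Hy. exact HW.
Qed.

Hypothesis r_equiv : equivalence_rel (@r_inf G r g).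

Lemma pi_eq_iff (x y : Ginf G g) :
  pi G r g x = pi G r g y <-> @r_inf G r g x y.
Proof.
  destruct r_equiv as [Hrefl [Hsym Htrans]]. split.
  - intros Hxy. apply (f_equal (@proj1_sig _ _)) in Hxy. simpl in Hxy.
    rewrite Hxy. apply Hrefl.
  - intros Hxy. apply ProofIrrelevanceTheory.subset_eq_compat.
    apply functional_extensionality. intros z.
    apply propositional_extensionality.
    split; intros Hz; eauto.
Qed.

Lemma star_set_pi (V : Ginf G g -> Prop) (x : Ginf G g) :
  @star_set G r g V (pi G r g x) <-> (forall y, @Ball G r g x y -> V y).
Proof.
  split.
  - intros Hx y Hxy. apply NNPP. intros HVy. apply Hx.
    exists y. split; [exact HVy |]. apply pi_eq_iff.
    destruct r_equiv as [_ [Hsym _]]. auto.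
  - intros Hball [y [HVy Hy]]. apply HVy, Hball.
    apply pi_eq_iff. symmetry. exact Hy.
Qed.

Lemma star_set_open
  (Hfiber : forall (x : Ginf G g) (A : Ginf G g -> Prop),
     open_inf A -> (forall y, @Ball G r g x y -> A y) ->
     exists j, forall y, @BallSet G r g (fiber j x) y -> A y)
  (V : Ginf G g -> Prop) :
  open_inf V -> open_star G r g (@star_set G r g V).
Proof.
  intros HV.
  set (good_cell := fun j (a : G j) => exists x : Ginf G g,
         (forall y, @BallSet G r g (fiber j x) y -> V y) /\ a = coord G g x j).
  exists (fun z => exists j, good_cell j (z j)). split.
  - apply prod_open_cylinder_union.
  - intros z. rewrite star_set_pi. split.
    + intros Hball. destruct (Hfiber z V HV Hball) as [j Hj].
      exists j, z. split; [exact Hj | reflexivity].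
    + intros [j [x [Hx Hzx]]] y Hzy. apply Hx.
      exists z. split; [exact Hzx | exact Hzy].
Qed.

End Quotient.

Theorem mainTheorem3 (G : nat -> Type) (r : forall n, G n -> G n -> Prop)
  (g : forall n, G (S n) -> G n) :
  g_cell_structure G r g ->
  (forall (x : Ginf G g) (A : Ginf G g -> Prop),
     open_inf A -> (forall y, @Ball G r g x y -> A y) ->
     exists j, forall y, @BallSet G r g (fiber j x) y -> A y) ->
  is_basis (open_star G r g)
    (fun W => exists V, open_inf V /\ W = @star_set G r g V).
Proof.
  intros [_ Hequiv] Hfiber. split.
  -
    intros B [V [HV ->]]. exact (star_set_open G r g Hequiv Hfiber V HV).
  -
    intros W p HW Hp.
    exists (@star_set G r g (fun x => W (pi G r g x))).
    split; [| split].
    + exists (fun x => W (pi G r g x)). split; [exact HW | reflexivity].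
    + apply star_set_preimage. exact Hp.
    + intros q Hq. apply star_set_preimage. exact Hq.
Qed.
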